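(* Let $\Gamma=(\mathcal{G},\mathcal{I},\boldsymbol{c})$ be a nonatomic routing game with BPR-type cost functions (i.e., there is $\beta\in\mathbb{R}_+$ such that $c_e(x)=t_e+a_ex^{\beta}$ with $t_e,a_e\in\mathbb{R}_+$ for every edge $e$) and a single origin-destination pair. Then there exists a demand-independent optimal toll (DIOT) $\boldsymbol{\tau}$ for $\Gamma$ that satisfies the budget constraint $\sum_{e\in\mathcal{E}}\tau_ex_e\ge0$ for every feasible flow $\boldsymbol{f}$ (for any demand), where $x_e$ is the load induced by $\boldsymbol{f}$.
   Context: A nonatomic routing game $\Gamma=(\mathcal{G},\mathcal{I},\boldsymbol{c})$ consists of a finite directed multigraph $\mathcal{G}=(\mathcal{V},\mathcal{E})$, a finite set $\mathcal{I}$ of origin-destination pairs $i$ with origin $o^i$ and destination $d^i$, and nondecreasing continuous cost functions $c_e:\mathbb{R}_+\to\mathbb{R}_+$. $\mathcal{P}^i$ is the set of simple $o^i$–$d^i$ paths. For a demand vector $\boldsymbol{\mu}\in\mathbb{R}_+^{\mathcal{I}}$, feasible flows are $\boldsymbol{f}\in\mathbb{R}_+^{\mathcal{P}}$ with $\sum_{p\in\mathcal{P}^i}f_p=\mu^i$; loads $x_e=\sum_{p\ni e}f_p$; path costs $c_p=\sum_{e\in p}c_e(x_e)$. A Wardrop equilibrium is a feasible flow where every used path of each pair $i$ has cost at most that of any other path in $\mathcal{P}^i$. The total cost is $L(\boldsymbol{f})=\sum_p f_pc_p(\boldsymbol{f})$; a system optimum minimizes $L$ over feasible flows. For a toll vector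 $\boldsymbol{\tau}\in\mathbb{R}^{\mathcal{E}}$ (entries may be negative), $\Gamma^{\boldsymbol{\tau}}$ has edge costs $c_e(x)+\tau_e$. $\boldsymbol{\tau}$ is a DIOT for $\Gamma$ if for every demand vector $\boldsymbol{\mu}\in\mathbb{R}_+^{\mathcal{I}}$ every Wardrop equilibrium of $\Gamma^{\boldsymbol{\tau}}$ with demand $\boldsymbol{\mu}$ is a system optimum of $\Gamma$ for demand $\boldsymbol{\mu}$. *)

From HB Require Import structures.
From mathcomp Require Import all_boot all_order all_algebra.
From mathcomp Require Import reals exp.
Set Implicit Arguments. Unset Strict Implicit. Unset Printing Implicit Defensive.
Import Order.TTheory GRing.Theory Num.Theory.
Local Open Scope ring_scope.

Fixpoint allseq (T : Type) (s : seq T) (n : nat) : seq (seq T) :=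
  if n is n'.+1 then [::] :: [seq x :: y | x <- s, y <- allseq s n']
  else [:: [::]].

Section Routing.
Variables (V E : finType) (src tgt : E -> V) (o d : V).

Definition simple_od_path (p : seq E) : bool :=
  if p is e :: p' then
    [&& src e == o, path (fun e1 e2 => tgt e1 == src e2) e p',
        tgt (last e p') == d & uniq (o :: map tgt p)]
  else o == d.

(* The (finite) set P of simple o-d paths; a simple path has at most #|E| edges. *)
Definition odpaths : seq (seq E) :=
  [seq p <- allseq (enum E) #|E| | simple_od_path p].

Variable R : realType.

(* a path flow is f : seq E -> R, only its values on odpaths matter *)
Definition load (f : seq E -> R) (e : E) : R :=
  \sum_(p <- odpaths | e \in p) f p.

Definition path_cost (c : E -> R -> R) (f : seq E -> R) (p : seq E) : R :=
  \sum_(e <- p) c e (load f e).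

Definition feasible (mu : R) (f : seq E -> R) : Prop :=
  (forall p, p \in odpaths -> 0 <= f p) /\ \sum_(p <- odpaths) f p = mu.

Definition wardrop (c : E -> R -> R) (mu : R) (f : seq E -> R) : Prop :=
  feasible mu f /\
  forall p q, p \in odpaths -> q \in odpaths -> 0 < f p ->
    path_cost c f p <= path_cost c f q.

Definition total_cost (c : E -> R -> R) (f : seq E -> R) : R :=
  \sum_(p <- odpaths) f p * path_cost c f p.

Definition system_optimum (c : E -> R -> R) (mu : R) (f : seq E -> R) : Prop :=
  feasible mu f /\ forall g, feasible mu g -> total_cost c f <= total_cost c g.

Definition tolled (c : E -> R -> R) (tau : E -> R) : E -> R -> R :=
  fun e x => c e x + tau e.

Definition DIOT (c : E -> R -> R) (tau : E -> R) : Prop :=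
  forall mu : R, 0 <= mu -> forall f, wardrop (tolled c tau) mu f -> system_optimum c mu f.

End Routing.

Definition bpr (R : realType) (E : Type) (beta : R) (t a : E -> R) : E -> R -> R :=
  fun e x => t e + a e * powR x beta.

From HB Require Import structures.
From mathcomp Require Import all_boot all_order all_algebra.
From mathcomp Require Import reals exp.
From mathcomp Require Import ring lra.
Import Order.TTheory GRing.Theory Num.Theory.
Set Implicit Arguments. Unset Strict Implicit.
Local Open Scope ring_scope.

(* Let m_e(x) = t_e + (beta + 1) a_e x^beta be the marginal cost of edge e,
   the derivative of its total cost x c_e(x).  As x c_e(x) is convex, a Wardrop
   equilibrium for the costs m_e, or for any positive multiple of them, is a
   system optimum.  The toll tau_e = - beta/(beta+1) t_e + M [tgt e = d], with
   M = sum_e t_e, turns c_e into m_e/(beta+1) + M [tgt e = d]; a simple o-d path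
   enters d exactly once (never if o = d), so the second term adds the same
   constant to every path cost and does not change the equilibria.  The toll
   paid along a simple path is M - beta/(beta+1) sum_(e in p) t_e >= 0, which
   gives the budget constraint. *)

Lemma Young_powR_succ (R : realType) (beta x y : R) :
  0 <= beta -> 0 <= x -> 0 <= y ->
  (beta + 1) * powR x beta * y <= y * powR y beta + beta * (x * powR x beta).
Proof.
move=> beta_ge0 x_ge0 y_ge0.
have [->|beta_neq0] := eqVneq beta 0; first by rewrite !powRr0; lra.
have beta_gt0 : 0 < beta by rewrite lt_def beta_neq0.
have p_gt0 : 0 < beta + 1 by lra.
have q_gt0 : 0 < (beta + 1) / beta by rewrite divr_gt0.
have pq : (beta + 1)^-1 + ((beta + 1) / beta)^-1 = 1.
  by field; rewrite !gt_eqF.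
have := conjugate_powR y_ge0 (powR_ge0 x beta) p_gt0 q_gt0 pq.
rewrite -powRrM.
have -> : beta * ((beta + 1) / beta) = beta + 1 by field.
rewrite -!(@mulr_powRB1 R _ (beta + 1)) // addrK => young.
have := ler_wpM2l (ltW p_gt0) young.
have -> : (beta + 1) * (y * powR y beta / (beta + 1)
            + x * powR x beta / ((beta + 1) / beta))
          = y * powR y beta + beta * (x * powR x beta).
  by field; rewrite !gt_eqF.
by rewrite -mulrA [powR x beta * y]mulrC.
Qed.

Section SimplePaths.
Variables (V E : finType) (src tgt : E -> V) (o d : V).
Local Notation P := (odpaths src tgt o d).

Lemma odpath_simple p : p \in P -> simple_od_path src tgt o d p.
Proof. by rewrite mem_filter => /andP[]. Qed.

Lemma odpath_uniq p : p \in P -> uniq p.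
Proof.
move/odpath_simple; case: p => [|e p] //= /and4P[_ _ _ /andP[_ uniq_tgt]].
exact: (@map_uniq _ _ tgt (e :: p)).
Qed.

Lemma odpath_nilE p : p \in P -> (p == [::]) = (o == d).
Proof.
move/odpath_simple; case: p => [|e p] /=; first by move=> ->.
move=> /and4P[_ _ /eqP last_d /andP[o_notin _]].
apply/esym/negbTE; apply: contra o_notin => /eqP ->.
by rewrite -last_d -last_map mem_last.
Qed.

Lemma count_odpath_enters_d p :
  p \in P -> count (fun e => tgt e == d) p = (o != d).
Proof.
move=> pP; have := odpath_nilE pP.
move: pP => /odpath_simple; case: p => [|e p] /=.
  by move=> /eqP -> _; rewrite eqxx.
move=> /and4P[_ _ /eqP last_d /andP[_ uniq_tgt]] /esym/negbT o_neq_d; rewrite o_neq_d.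
have := @count_uniq_mem _ (tgt e :: map tgt p) d uniq_tgt.
rewrite -last_d -[tgt e :: _]/(map tgt (e :: p)) -last_map mem_last /= => <-.
by rewrite count_map.
Qed.

Variable R : realType.

Lemma sum_odpath_enters_d p :
  p \in P -> \sum_(e <- p) (tgt e == d)%:R = (o != d)%:R :> R.
Proof.
move=> pP; rewrite -(count_odpath_enters_d pP); elim: p {pP} => [|e p IH].
  by rewrite big_nil.
by rewrite big_cons IH /= natrD.
Qed.

Lemma sum_odpath_le (w : E -> R) p :
  (forall e, 0 <= w e) -> p \in P -> \sum_(e <- p) w e <= (o != d)%:R * \sum_e w e.
Proof.
move=> w_ge0 pP; have := odpath_nilE pP.
have [_ /eqP -> | _ _] := eqVneq o d; first by rewrite big_nil mul0r.
rewrite mul1r (big_uniq _ (odpath_uniq pP)) [leRHS](bigID (mem p)) /= lerDl.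
exact: sumr_ge0.
Qed.

Lemma sum_odpaths_load (w : E -> R) (f : seq E -> R) :
  \sum_(p <- P) f p * \sum_(e <- p) w e = \sum_e w e * load src tgt o d f e.
Proof.
rewrite big_seq.
under eq_bigr => p pP do
  rewrite (big_uniq _ (odpath_uniq pP)) mulr_sumr big_mkcond /=.
rewrite -big_seq exchange_big /=; apply: eq_bigr => e _.
rewrite /load mulr_sumr [RHS]big_mkcond; apply: eq_bigr => p _.
by case: (e \in p); rewrite ?mulr0 // mulrC.
Qed.

Lemma load_ge0 mu (f : seq E -> R) e :
  feasible src tgt o d mu f -> 0 <= load src tgt o d f e.
Proof.
case=> f_ge0 _; rewrite /load big_seq_cond.
by apply: sumr_ge0 => p /andP[/f_ge0].
Qed.

Lemma feasible0_eq0 (f : seq E -> R) p :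
  feasible src tgt o d 0 f -> p \in P -> f p = 0.
Proof.
move=> [f_ge0 f_sum] pP.
have : \sum_(q <- P | q \in P) f q == 0 by rewrite -big_seq f_sum.
rewrite psumr_eq0; last by move=> q /f_ge0.
by move/allP => /(_ p pP); rewrite pP => /eqP.
Qed.

Lemma wardrop_variational_ineq mu (f g C : seq E -> R) :
  feasible src tgt o d mu f -> feasible src tgt o d mu g ->
  (forall p q, p \in P -> q \in P -> 0 < f p -> C p <= C q) ->
  \sum_(p <- P) f p * C p <= \sum_(p <- P) g p * C p.
Proof.
move=> Ff Fg f_wardrop; have [f_ge0 f_sum] := Ff; have [g_ge0 g_sum] := Fg.
have : 0 <= mu by rewrite -f_sum big_seq sumr_ge0.
rewrite le_eqVlt => /predU1P[mu0 | mu_gt0].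
  rewrite -mu0 in Ff Fg; rewrite !big_seq !big1 // => p pP.
    by rewrite (feasible0_eq0 Fg pP) mul0r.
  by rewrite (feasible0_eq0 Ff pP) mul0r.
(* after multiplying by mu = sum g = sum f, both sides are sums over pairs of
   paths that compare termwise *)
rewrite -(ler_pM2l mu_gt0) -{1}g_sum -f_sum !mulr_suml.
under eq_bigr => q _ do rewrite mulr_sumr.
under [leRHS]eq_bigr => p _ do rewrite mulr_sumr.
rewrite [leRHS]exchange_big /= !big_seq; apply: ler_sum => q qP.
rewrite !big_seq; apply: ler_sum => p pP.
rewrite [leRHS]mulrCA; apply: ler_wpM2l; first exact: g_ge0.
have := f_ge0 p pP; rewrite le_eqVlt => /predU1P[<- | fp_gt0].
  by rewrite !mul0r.
by rewrite ler_wpM2l ?(ltW fp_gt0) ?f_wardrop.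
Qed.

Lemma wardrop_path_affine (c c' : E -> R -> R) (lambda kappa mu : R) f :
  0 < lambda ->
  (forall p, p \in P ->
     path_cost src tgt o d c' f p = lambda * path_cost src tgt o d c f p + kappa) ->
  wardrop src tgt o d c' mu f -> wardrop src tgt o d c mu f.
Proof.
move=> lambda_gt0 c'E [Ff f_wardrop]; split=> // p q pP qP fp_gt0.
by rewrite -(ler_pM2l lambda_gt0) -(lerD2r kappa) -!c'E ?f_wardrop.
Qed.

(* Beckmann's principle; the hypothesis says that [m e x] is a supergradient of
   the edge total cost [y |-> c e y * y] at [x]. *)
Lemma wardrop_marginal_system_optimum (c m : E -> R -> R) mu f :
  (forall e x y, 0 <= x -> 0 <= y -> m e x * (y - x) <= c e y * y - c e x * x) ->
  wardrop src tgt o d m mu f -> system_optimum src tgt o d c mu f.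
Proof.
move=> m_super [Ff f_wardrop]; split=> // g Fg.
set x := load src tgt o d f; set y := load src tgt o d g.
have total_costE h : total_cost src tgt o d c h =
    \sum_e c e (load src tgt o d h e) * load src tgt o d h e.
  exact: sum_odpaths_load.
have marginal_gap : \sum_e m e (x e) * x e <= \sum_e m e (x e) * y e.
  rewrite -!sum_odpaths_load; exact: wardrop_variational_ineq Ff Fg f_wardrop.
rewrite !total_costE -subr_ge0 -sumrB.
apply: le_trans (ler_sum _ (fun e _ => m_super e _ _ (load_ge0 e Ff) (load_ge0 e Fg))).
by rewrite (eq_bigr _ (fun e _ => mulrBr _ _ _)) sumrB subr_ge0.
Qed.

End SimplePaths.

Section BPR.
Variables (R : realType) (E : finType) (beta : R) (t a : E -> R).
Hypotheses (beta_ge0 : 0 <= beta) (t_ge0 : forall e, 0 <= t e)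
           (a_ge0 : forall e, 0 <= a e).

Let beta1_gt0 : 0 < beta + 1. Proof. by rewrite (le_lt_trans beta_ge0) // ltrDl. Qed.

Definition bpr_marginal : E -> R -> R :=
  fun e x => t e + (beta + 1) * a e * powR x beta.

Lemma bpr_marginal_supergradient e x y : 0 <= x -> 0 <= y ->
  bpr_marginal e x * (y - x) <= bpr beta t a e y * y - bpr beta t a e x * x.
Proof.
move=> x_ge0 y_ge0; rewrite /bpr_marginal /bpr -subr_ge0.
have -> : (t e + a e * powR y beta) * y - (t e + a e * powR x beta) * x
    - (t e + (beta + 1) * a e * powR x beta) * (y - x)
  = a e * (y * powR y beta + beta * (x * powR x beta)
           - (beta + 1) * powR x beta * y) by ring.
by rewrite mulr_ge0 // subr_ge0 Young_powR_succ.
Qed.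

Variables (V : finType) (src tgt : E -> V) (o d : V).
Local Notation P := (odpaths src tgt o d).

Definition bpr_toll : E -> R :=
  fun e => - (beta / (beta + 1)) * t e + (\sum_e' t e') * (tgt e == d)%:R.

Lemma tolled_bprE e x :
  tolled (bpr beta t a) bpr_toll e x
  = (beta + 1)^-1 * bpr_marginal e x + (\sum_e' t e') * (tgt e == d)%:R.
Proof.
by rewrite /tolled /bpr /bpr_toll /bpr_marginal; field; rewrite gt_eqF.
Qed.

Lemma bpr_toll_DIOT : DIOT src tgt o d (bpr beta t a) bpr_toll.
Proof.
move=> mu _ f f_wardrop.
apply: (wardrop_marginal_system_optimum bpr_marginal_supergradient).
apply: (wardrop_path_affine (lambda := (beta + 1)^-1)
          (kappa := (\sum_e t e) * (o != d)%:R) _ _ f_wardrop).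
  by rewrite invr_gt0.
move=> p pP; rewrite /path_cost.
under eq_bigr => e _ do rewrite tolled_bprE.
by rewrite big_split /= -!mulr_sumr (sum_odpath_enters_d _ pP).
Qed.

Lemma bpr_toll_odpath_ge0 p : p \in P -> 0 <= \sum_(e <- p) bpr_toll e.
Proof.
move=> pP; rewrite big_split /= -!mulr_sumr (sum_odpath_enters_d _ pP) addrC.
rewrite [_ * (o != d)%:R]mulrC.
apply: le_trans (lerD (sum_odpath_le t_ge0 pP) (lexx _)).
rewrite mulNr -{1}[\sum_(e <- p) t e]mul1r -mulrBl mulr_ge0 ?sumr_ge0 // subr_ge0.
by rewrite ler_pdivrMr // mul1r lerDl.
Qed.

Lemma bpr_toll_budget mu f : feasible src tgt o d mu f ->
  0 <= \sum_e bpr_toll e * load src tgt o d f e.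
Proof.
move=> [f_ge0 _]; rewrite -sum_odpaths_load big_seq.
by apply: sumr_ge0 => p pP; rewrite mulr_ge0 ?f_ge0 ?bpr_toll_odpath_ge0.
Qed.

End BPR.

Theorem corollary10 (R : realType) (V E : finType) (src tgt : E -> V) (o d : V)
    (beta : R) (t a : E -> R) :
  0 <= beta -> (forall e, 0 <= t e) -> (forall e, 0 <= a e) ->
  exists tau : E -> R,
    DIOT src tgt o d (bpr beta t a) tau /\
    (forall (mu : R) (f : seq E -> R), 0 <= mu -> feasible src tgt o d mu f ->
       0 <= \sum_(e : E) tau e * load src tgt o d f e).
Proof.
move=> beta_ge0 t_ge0 a_ge0; exists (bpr_toll beta t tgt d); split.
  exact: bpr_toll_DIOT.
by move=> mu f _; apply: bpr_toll_budget.
Qed.
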